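(* Let $N\ge1$, let $\mathcal{L}_e$ be a finite index set of size $L_e$, for each $\ell\in\mathcal{L}_e$ let $\mathbf{a}_\ell\in\mathbb{R}^N$, $r_\ell>0$, $x_\ell>0$, and let $L$ be a positive integer. For $\mathbf{b}\in\mathbb{R}^{L_e}$ set $\mathbf{R}^{-1}(\mathbf{b})=\frac12\sum_{\ell}\frac{b_\ell}{r_\ell}\mathbf{a}_\ell\mathbf{a}_\ell^\top$, $\mathbf{X}^{-1}(\mathbf{b})=\frac12\sum_\ell\frac{b_\ell}{x_\ell}\mathbf{a}_\ell\mathbf{a}_\ell^\top$ and, when these are invertible, $$\boldsymbol{\Sigma}(\mathbf{b})=\mathbf{R}(\mathbf{b})\boldsymbol{\Sigma}_p\mathbf{R}(\mathbf{b})+\mathbf{X}(\mathbf{b})\boldsymbol{\Sigma}_q\mathbf{X}(\mathbf{b})+\mathbf{R}(\mathbf{b})\boldsymbol{\Sigma}_{pq}\mathbf{X}(\mathbf{b})+\mathbf{X}(\mathbf{b})\boldsymbol{\Sigma}_{pq}^\top\mathbf{R}(\mathbf{b})+\sigma_n^2\mathbf{I}_N,$$ where $\sigma_n^2\ge0$ and $\boldsymbol{\Sigma}_p,\boldsymbol{\Sigma}_q,\boldsymbol{\Sigma}_{pq}\in\mathbb{R}^{N\times N}$ are such that $\begin{bmatrix}\boldsymbol{\Sigma}_p&\boldsymbol{\Sigma}_{pq}\\ \boldsymbol{\Sigma}_{pq}^\top&\boldsymbol{\Sigma}_q\end{bmatrix}$ is symmetric positive semidefinite (a joint covariance matrix).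 Let $f(\mathbf{b})=\log|\boldsymbol{\Sigma}(\mathbf{b})|+\operatorname{trace}(\boldsymbol{\Sigma}^{-1}(\mathbf{b})\hat{\boldsymbol{\Sigma}})$, defined (finite) at those $\mathbf{b}$ for which $\mathbf{R}(\mathbf{b}),\mathbf{X}(\mathbf{b})$ exist and $\boldsymbol{\Sigma}(\mathbf{b})\succ0$. Let $\mathbf{b}_o\in\{0,1\}^{L_e}$ with $\mathbf{1}^\top\mathbf{b}_o=L$ be such that $f(\mathbf{b}_o)$ is defined (the true line indicator vector), and suppose $\hat{\boldsymbol{\Sigma}}=\boldsymbol{\Sigma}(\mathbf{b}_o)$. Then $\nabla f(\mathbf{b}_o)=\mathbf{0}$, and $\mathbf{b}_o$ is a global minimizer of $f$ both over $\{\mathbf{b}\in\{0,1\}^{L_e}:\mathbf{1}^\top\mathbf{b}=L\}$ and over $\{\mathbf{b}\in[0,1]^{L_e}:\mathbf{1}^\top\mathbf{b}=L\}$ (among the points where $f$ is defined).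
   Context: $|\cdot|$ is the determinant; $\mathbf{1}$ is the all-ones vector. $\mathbf{b}$ is the indicator vector of energized lines among the existing lines $\mathcal{L}_e$ of a distribution grid, $\mathbf{a}_\ell^\top$ are rows of its reduced incidence matrix, and $\hat{\boldsymbol{\Sigma}}$ plays the role of the sample covariance of differential squared-voltage magnitudes, here assumed to have converged to the ensemble covariance. *)

From HB Require Import structures.
From mathcomp Require Import all_boot all_order all_algebra.
From mathcomp Require Import all_classical all_reals all_analysis.
Set Implicit Arguments. Unset Strict Implicit. Unset Printing Implicit Defensive.
Import Order.TTheory GRing.Theory Num.Theory.
Local Open Scope ring_scope.

Section Defs.
Variables (R : realType).

Definition psd_mx n (M : 'M[R]_n) : Prop :=
  M^T = M /\ forall v : 'rV[R]_n, 0 <= (v *m M *m v^T) 0 0.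
Definition pd_mx n (M : 'M[R]_n) : Prop :=
  M^T = M /\ forall v : 'rV[R]_n, v != 0 -> 0 < (v *m M *m v^T) 0 0.

Variables (N Le : nat) (a : 'I_Le -> 'cV[R]_N) (r x : 'I_Le -> R)
  (Sp Sq Spq : 'M[R]_N) (sn2 : R).

Definition Rinv_b (b : 'rV[R]_Le) : 'M[R]_N :=
  2^-1 *: \sum_(l < Le) (b 0 l / r l) *: (a l *m (a l)^T).
Definition Xinv_b (b : 'rV[R]_Le) : 'M[R]_N :=
  2^-1 *: \sum_(l < Le) (b 0 l / x l) *: (a l *m (a l)^T).

Definition Sigma_b (b : 'rV[R]_Le) : 'M[R]_N :=
  let Rb := invmx (Rinv_b b) in let Xb := invmx (Xinv_b b) in
  Rb *m Sp *m Rb + Xb *m Sq *m Xb + Rb *m Spq *m Xb + Xb *m Spq^T *m Rb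
  + sn2%:M.

Definition f_defined (b : 'rV[R]_Le) : Prop :=
  Rinv_b b \in unitmx /\ Xinv_b b \in unitmx /\ pd_mx (Sigma_b b).

(* f(b) = log|Sigma(b)| + tr(Sigma(b)^{-1} Shat); value 0 where undefined
   (only used on the domain, or for derivatives at interior points). *)
Definition f_obj (Shat : 'M[R]_N) (b : 'rV[R]_Le) : R :=
  if `[< f_defined b >] then ln (\det (Sigma_b b)) + \tr (invmx (Sigma_b b) *m Shat)
  else 0.

End Defs.

From HB Require Import structures.
From mathcomp Require Import all_boot all_order all_algebra.
From mathcomp Require Import all_classical all_reals all_analysis.
From mathcomp Require Import ring lra.
Import Order.TTheory GRing.Theory Num.Theory.
Import numFieldNormedType.Exports.
Local Open Scope ring_scope.
Local Open Scope classical_set_scope.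

Set Implicit Arguments.
Unset Strict Implicit.
Unset Printing Implicit Defensive.

(* With [Shat = Sigma bo] the objective is [f b = ln |Sigma b| + tr (Sigma b^-1 Sigma bo)], and
   [ln |T| + N <= ln |S| + tr (S^-1 T)] for positive definite [S] and [T]: writing [S = C C^T]
   and [P = C^-1 T C^-T] it reads [ln |P| <= tr P - N], which follows by induction on Schur
   complements from [ln p <= p - 1]. Hence [bo] minimizes [f] wherever [f] is defined, whatever
   the constraint set. Exchanging [S] and [T] bounds the increment along a direction [e]:
   [0 <= f (bo + t e) - f bo <= tr ((Sigma_t^-1 - Sigma_0^-1) (Sigma_0 - Sigma_t))], and
   [Sigma_t - Sigma_0 = O(t)] because [t |-> Sigma (bo + t e)] is built from affine maps by sums,
   products and inverses. So the increment is [o(t)] and the gradient vanishes. *)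

Section PositiveDefinite.
Variable R : realType.

Lemma pd_mx_congr n (S C : 'M[R]_n) :
  pd_mx S -> C \in unitmx -> pd_mx (C *m S *m C^T).
Proof.
move=> [symS posS] uC; split; first by rewrite !trmx_mul trmxK symS mulmxA.
move=> v v0; rewrite -!mulmxA mulmxA -[C^T *m v^T]trmx_mul.
rewrite [_ *m (S *m _)]mulmxA; apply: posS.
by apply: contra v0 => /eqP vC0; rewrite -(mulmxK uC v) vC0 mul0mx.
Qed.

Lemma pd_mx_schur n (S : 'M[R]_(1 + n)) : pd_mx S ->
  let p := ulsubmx S 0 0 in let u := ursubmx S in
  let L : 'M[R]_(1 + n) := block_mx 1%:M 0 (p^-1 *: u^T) 1%:M in
  let Q := drsubmx S - p^-1 *: (u^T *m u) in
  [/\ 0 < p, pd_mx Q, \det L = 1 & S = L *m block_mx p%:M 0 0 Q *m L^T].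
Proof.
move=> [symS posS] p u L Q.
have SE : S = block_mx p%:M u u^T (drsubmx S).
  by rewrite -mx11_scalar /u trmx_ursub symS submxK.
have p_gt0 : 0 < p.
  have := posS (row_mx 1%:M 0).
  rewrite {1}SE mul_row_block tr_row_mx mul_row_col !mul0mx !addr0 !mul1mx.
  rewrite trmx0 mulmx0 addr0 trmx1 mulmx1 mxE eqxx mulr1n; apply.
  apply/negP => /eqP/(congr1 lsubmx); rewrite row_mxKl linear0.
  by move/matrixP/(_ 0 0); rewrite !mxE /= mulr1n => /eqP; rewrite oner_eq0.
have detL : \det L = 1 by rewrite det_lblock !det1 mulr1.
have SL : S = L *m block_mx p%:M 0 0 Q *m L^T.
  rewrite tr_block_mx !trmx1 trmx0 linearZ /= trmxK !mulmx_block.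
  rewrite !mul0mx !mulmx0 !mul1mx !mulmx1 !addr0 !add0r.
  rewrite mul_scalar_mx mul_mx_scalar !scalerA mulfV ?gt_eqF // !scale1r.
  by rewrite -scalemxAr /Q addrC subrK -SE.
split => //.
have uL : L \in unitmx by rewrite unitmxE detL unitr1.
have DE : invmx L *m S *m (invmx L)^T = block_mx p%:M 0 0 Q.
  by rewrite SL !mulmxA mulVmx // mul1mx -mulmxA -trmx_mul mulVmx ?trmx1 ?mulmx1.
have [symD posD] : pd_mx (invmx L *m S *m (invmx L)^T).
  by apply: pd_mx_congr; rewrite ?unitmx_inv.
rewrite DE in symD posD.
split; first by have := congr1 drsubmx symD; rewrite tr_block_mx !block_mxKdr.
move=> w w0; have := posD (row_mx 0 w).
rewrite mul_row_block tr_row_mx mul_row_col !mul0mx !mulmx0 !add0r mul0mx add0r.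
apply; apply: contra w0 => /eqP/(congr1 rsubmx).
by rewrite row_mxKr linear0 => ->.
Qed.

Lemma pd_mx_cholesky n (S : 'M[R]_n) :
  pd_mx S -> exists2 C, C \in unitmx & S = C *m C^T.
Proof.
elim: n S => [|n IH] S pdS.
  by exists 1%:M; [exact: unitmx1 | apply/matrixP => -[]].
move: S pdS; rewrite -[n.+1]/(1 + n) => S /pd_mx_schur /=.
set p := ulsubmx S 0 0; set L := block_mx _ _ _ _; set Q := _ - _.
move=> [p_gt0 pdQ detL ->].
have [C uC QC] := IH _ pdQ.
exists (L *m block_mx (Num.sqrt p)%:M 0 0 C).
  rewrite unitmx_mul unitmxE detL unitr1 /= unitmxE det_lblock det_scalar1.
  by rewrite unitrM unitfE gt_eqF ?sqrtr_gt0 //= -unitmxE.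
rewrite trmx_mul !mulmxA; congr (_ *m _).
rewrite -mulmxA; congr (_ *m _); rewrite tr_block_mx mulmx_block.
rewrite !trmx0 !mulmx0 !mul0mx !addr0 !add0r tr_scalar_mx -scalar_mxM -expr2.
by rewrite sqr_sqrtr ?ltW // -QC.
Qed.

Lemma pd_mx_det_gt0 n (S : 'M[R]_n) : pd_mx S -> 0 < \det S.
Proof.
move=> /pd_mx_cholesky [C uC ->]; rewrite det_mulmx det_tr -expr2.
by rewrite exprn_even_gt0 //= -unitfE -unitmxE.
Qed.

Lemma pd_mx_unit n (S : 'M[R]_n) : pd_mx S -> S \in unitmx.
Proof. by move=> /pd_mx_det_gt0 S_gt0; rewrite unitmxE unitfE gt_eqF. Qed.

Lemma ln_det_le_trace n (S : 'M[R]_n) : pd_mx S -> ln (\det S) <= \tr S - n%:R.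
Proof.
elim: n S => [|n IH] S pdS.
  by rewrite det_mx00 ln1 [S]flatmx0 mxtrace0 subrr.
move: S pdS; rewrite -[n.+1]/(1 + n) => S /pd_mx_schur /=.
set p := ulsubmx S 0 0; set u := ursubmx S; set Q := _ - _.
move=> [p_gt0 pdQ detL SE].
have detS : \det S = p * \det Q.
  by rewrite SE !det_mulmx det_tr detL det_lblock det_scalar1 mul1r mulr1.
have trS : \tr S = p + \tr Q + p^-1 * \tr (u^T *m u).
  rewrite -[in LHS](submxK S) mxtrace_block trace_mx11 -/p.
  by rewrite -mxtraceZ -addrA -mxtraceD /Q subrK.
have tr_ge0 : 0 <= p^-1 * \tr (u^T *m u).
  rewrite mulr_ge0 ?invr_ge0 ?(ltW p_gt0) // mxtrace_mulC trace_mx11 !mxE.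
  by apply: sumr_ge0 => j _; rewrite [u^T _ _]mxE -expr2 sqr_ge0.
have lnp : ln p <= p - 1 by rewrite -[p in ln p](subrKC 1) le_ln1Dx // ltrBrDl subrr.
have := IH _ pdQ; rewrite detS trS lnM ?posrE ?pd_mx_det_gt0 // -natr1; lra.
Qed.

Lemma psd_mx_quad_eq0 n (M : 'M[R]_n) (v : 'rV[R]_n) :
  M^T = M -> (forall w : 'rV[R]_n, 0 <= (w *m M *m w^T) 0 0) ->
  (v *m M *m v^T) 0 0 = 0 -> M *m v^T = 0.
Proof.
move=> symM posM vMv0; apply/matrixP => i j; rewrite (ord1 j) [RHS]mxE.
pose w : 'rV[R]_n := delta_mx 0 i.
have <- : (w *m M *m v^T) 0 0 = (M *m v^T) i 0 by rewrite -rowE -row_mul mxE.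
set c := (w *m M *m v^T) 0 0; set d := (w *m M *m w^T) 0 0.
have vMw : (v *m M *m w^T) 0 0 = c.
  by rewrite -[LHS]trace_mx11 -mxtrace_tr !trmx_mul trmxK symM mulmxA trace_mx11.
have quad s : ((v + s *: w) *m M *m (v + s *: w)^T) 0 0 = 2 * s * c + s ^+ 2 * d.
  rewrite /c /d linearD /= linearZ /= !mulmxDl !mulmxDr -!scalemxAl -!scalemxAr.
  by move: vMv0 vMw; rewrite /c !mxE => -> ->; ring.
have d_ge0 : 0 <= d by apply: posM.
(* [2 s c + s^2 d >= 0] for all [s] forces [c = 0]: take [s = - c / (d + 1)] *)
have [k ck] : exists k, c = k * (d + 1).
  by exists (c / (d + 1)); rewrite mulfVK // gt_eqF // ltr_wpDl.
have := posM (v - k *: w); rewrite -scaleNr quad ck => quad_ge0.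
suff -> : k = 0 by rewrite mul0r.
by apply/eqP; rewrite -sqrf_eq0 eq_le sqr_ge0 andbT; nra.
Qed.

Lemma psd_mx_unit_pd n (M : 'M[R]_n) :
  M^T = M -> (forall v : 'rV[R]_n, 0 <= (v *m M *m v^T) 0 0) ->
  M \in unitmx -> pd_mx M.
Proof.
move=> symM posM uM; split => // v v0; rewrite lt_def posM andbT.
apply: contra v0 => /eqP /(psd_mx_quad_eq0 symM posM) Mv0.
by rewrite -[v]trmxK -(mulKmx uM v^T) Mv0 mulmx0 trmx0.
Qed.

(* Up to constants, the Gaussian negative log-likelihood of the covariance [S] given the
   sample covariance [Shat]. *)
Definition nll n (S Shat : 'M[R]_n) : R := ln (\det S) + \tr (invmx S *m Shat).

Lemma nll_id n (S : 'M[R]_n) : S \in unitmx -> nll S S = ln (\det S) + n%:R.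
Proof. by move=> uS; rewrite /nll mulVmx // mxtrace1. Qed.

Lemma nll_min n (S T : 'M[R]_n) : pd_mx S -> pd_mx T -> nll T T <= nll S T.
Proof.
move=> pdS pdT; have [C uC SE] := pd_mx_cholesky pdS.
pose P := invmx C *m T *m (invmx C)^T.
have pdP : pd_mx P by apply: pd_mx_congr; rewrite ?unitmx_inv.
have TE : T = C *m P *m C^T.
  by rewrite /P !mulmxA mulmxV // mul1mx -mulmxA -trmx_mul mulmxV ?trmx1 ?mulmx1.
have detT : \det T = \det S * \det P.
  by rewrite TE SE !det_mulmx !det_tr mulrAC mulrA.
have trT : \tr (invmx S *m T) = \tr P.
  have uS : S \in unitmx by rewrite SE unitmx_mul unitmx_tr uC.
  have SinvC : invmx S *m C = invmx C^T.
    rewrite -[LHS](mulmxK (_ : C^T \in unitmx)) ?unitmx_tr //.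
    by rewrite -[invmx S *m C *m C^T]mulmxA -SE mulVmx // mul1mx.
  rewrite TE !mulmxA mxtrace_mulC !mulmxA -[C^T *m _ *m C]mulmxA SinvC.
  by rewrite mulmxV ?unitmx_tr // mul1mx.
rewrite nll_id ?pd_mx_unit // /nll detT trT lnM ?posrE ?pd_mx_det_gt0 //.
by have := ln_det_le_trace pdP; lra.
Qed.

Lemma nll_sub_le n (S T : 'M[R]_n) : pd_mx S -> pd_mx T ->
  nll S T - nll T T <= \tr ((invmx S - invmx T) *m (T - S)).
Proof.
move=> pdS pdT; have := nll_min pdT pdS.
rewrite !nll_id ?pd_mx_unit // /nll mulmxBl !mulmxBr !mulVmx ?pd_mx_unit //.
rewrite !raddfB /= mxtrace1; lra.
Qed.

End PositiveDefinite.

Section MatrixLimits.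
Variables (R : realType) (T : Type) (G : set_system T).
Context {FG : Filter G}.

Lemma cvg_mxP m n (F : T -> 'M[R]_(m, n)) (A : 'M[R]_(m, n)) :
  F t @[t --> G] --> A <-> forall i j, F t i j @[t --> G] --> A i j.
Proof.
split=> [FA i j | FA].
  exact: (continuous_cvg FG (@coord_continuous R m n i j A) FA).
have [_] := @cvg_mx_entourageP R m n (F @ G) _ A; apply=> E entE.
rewrite near_simpl; apply: filter_forall => i; apply: filter_forall => j.
have := (@cvg_app_entourageP _ _ (fun t => F t i j) G FG (A i j)).1 (FA i j) E entE.
by apply: filterS => t; rewrite inE.
Qed.

Lemma cvg_sumr (I : Type) (r : seq I) (P : pred I) (f : I -> T -> R) (a : I -> R) :
  (forall i, P i -> f i t @[t --> G] --> a i) ->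
  \sum_(i <- r | P i) f i t @[t --> G] --> \sum_(i <- r | P i) a i.
Proof. by move=> fa; apply: cvg_big => //; exact: add_continuous. Qed.

Lemma cvg_prodr (I : Type) (r : seq I) (P : pred I) (f : I -> T -> R) (a : I -> R) :
  (forall i, P i -> f i t @[t --> G] --> a i) ->
  \prod_(i <- r | P i) f i t @[t --> G] --> \prod_(i <- r | P i) a i.
Proof. by move=> fa; apply: cvg_big => //; exact: mul_continuous. Qed.

Lemma cvg_mulmx m n p (F : T -> 'M[R]_(m, n)) (H : T -> 'M[R]_(n, p))
  (A : 'M[R]_(m, n)) (B : 'M[R]_(n, p)) :
  F t @[t --> G] --> A -> H t @[t --> G] --> B -> F t *m H t @[t --> G] --> A *m B.
Proof.
move=> /cvg_mxP FA /cvg_mxP HB; apply/cvg_mxP => i j; rewrite mxE.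
rewrite (_ : (fun t => _) = fun t => \sum_k F t i k * H t k j); last first.
  by apply: funext => t; rewrite mxE.
by apply: cvg_sumr => k _; exact: cvgM.
Qed.

Lemma cvg_mxtrace n (F : T -> 'M[R]_n) (A : 'M[R]_n) :
  F t @[t --> G] --> A -> \tr (F t) @[t --> G] --> \tr A.
Proof. by move=> /cvg_mxP FA; apply: cvg_sumr => i _; exact: FA. Qed.

Lemma cvg_det n (F : T -> 'M[R]_n) (A : 'M[R]_n) :
  F t @[t --> G] --> A -> \det (F t) @[t --> G] --> \det A.
Proof.
move=> /cvg_mxP FA; apply: cvg_sumr => s _; apply: cvgM; first exact: cvg_cst.
by apply: cvg_prodr => i _; exact: FA.
Qed.

Lemma cvg_adj n (F : T -> 'M[R]_n) (A : 'M[R]_n) :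
  F t @[t --> G] --> A -> \adj (F t) @[t --> G] --> \adj A.
Proof.
move=> /cvg_mxP FA; apply/cvg_mxP => i j; rewrite mxE.
rewrite (_ : (fun t => _) = fun t => cofactor (F t) j i); last first.
  by apply: funext => t; rewrite mxE.
apply: cvgM; first exact: cvg_cst.
apply: cvg_det; apply/cvg_mxP => k l; rewrite !mxE.
rewrite (_ : (fun t => _) = fun t => F t (lift j k) (lift i l)) ?FA //.
by apply: funext => t; rewrite !mxE.
Qed.

Lemma near_cvg_unitmx n (F : T -> 'M[R]_n) (A : 'M[R]_n) :
  F t @[t --> G] --> A -> A \in unitmx -> \forall t \near G, F t \in unitmx.
Proof.
move=> /cvg_det FA; rewrite unitmxE unitfE => detA.
by apply: filterS (cvgr_neq0 _ FA detA) => t; rewrite unitmxE unitfE.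
Qed.

Lemma cvg_invmx n (F : T -> 'M[R]_n) (A : 'M[R]_n) :
  F t @[t --> G] --> A -> A \in unitmx -> invmx (F t) @[t --> G] --> invmx A.
Proof.
move=> FA uA; have detA : \det A != 0 by rewrite -unitfE -unitmxE.
have : (\det (F t))^-1 *: \adj (F t) @[t --> G] --> (\det A)^-1 *: \adj A.
  by apply: cvgZ; [exact: cvgV (cvg_det FA) | exact: cvg_adj].
rewrite /invmx uA; apply: cvg_trans; apply: near_eq_cvg.
by apply: filterS (near_cvg_unitmx FA uA) => t ->.
Qed.

End MatrixLimits.

Section Caratheodory.
Variables (R : realType) (x : R).

(* Caratheodory's form of differentiability at [x], the slope [D] being only required to
   converge. *)
Definition caratheodory m n (F : R -> 'M[R]_(m, n)) : Prop :=
  exists (D : R -> 'M[R]_(m, n)) (D0 : 'M[R]_(m, n)),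
    (\forall t \near x, F t = F x + (t - x) *: D t) /\ D t @[t --> x] --> D0.

Lemma caratheodory_cvg m n (F : R -> 'M[R]_(m, n)) :
  caratheodory F -> F t @[t --> x] --> F x.
Proof.
move=> [D [D0 [FD DD0]]].
have : F x + (t - x) *: D t @[t --> x] --> F x + (x - x) *: D0.
  apply: cvgD; first exact: cvg_cst.
  by apply: cvgZ => //; apply: cvgB; [exact: cvg_id | exact: cvg_cst].
rewrite subrr scale0r addr0; apply: cvg_trans; apply: near_eq_cvg.
by apply: filterS FD => t ->.
Qed.

Lemma caratheodory_cst m n (A : 'M[R]_(m, n)) : caratheodory (fun=> A).
Proof.
exists (fun=> 0), 0; split; last exact: cvg_cst.
by near=> t; rewrite scaler0 addr0.
Unshelve. all: by end_near.
Qed.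

Lemma caratheodory_affine m n (A B : 'M[R]_(m, n)) : caratheodory (fun t => A + t *: B).
Proof.
exists (fun=> B), B; split; last exact: cvg_cst.
by near=> t; rewrite -addrA -scalerDl subrKC.
Unshelve. all: by end_near.
Qed.

Lemma caratheodoryD m n (F H : R -> 'M[R]_(m, n)) :
  caratheodory F -> caratheodory H -> caratheodory (fun t => F t + H t).
Proof.
move=> [DF [DF0 [FD DFc]]] [DH [DH0 [HD DHc]]].
exists (fun t => DF t + DH t), (DF0 + DH0); split; last exact: cvgD.
near=> t; have [-> ->] : F t = F x + (t - x) *: DF t /\ H t = H x + (t - x) *: DH t.
  by split; near: t.
by rewrite scalerDr addrACA.
Unshelve. all: by end_near.
Qed.

Lemma caratheodoryM m n p (F : R -> 'M[R]_(m, n)) (H : R -> 'M[R]_(n, p)) :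
  caratheodory F -> caratheodory H -> caratheodory (fun t => F t *m H t).
Proof.
move=> cF cH; have Hc := caratheodory_cvg cH.
move: cF cH => [DF [DF0 [FD DFc]]] [DH [DH0 [HD DHc]]].
exists (fun t => DF t *m H t + F x *m DH t), (DF0 *m H x + F x *m DH0); split.
  near=> t; have [-> HE] : F t = F x + (t - x) *: DF t /\ H t = H x + (t - x) *: DH t.
    by split; near: t.
  rewrite mulmxDl {1}HE mulmxDr -scalemxAl -scalemxAr scalerDr -addrA.
  by congr (_ + _); rewrite addrC.
by apply: cvgD; apply: cvg_mulmx => //; exact: cvg_cst.
Unshelve. all: by end_near.
Qed.

Lemma caratheodoryV n (F : R -> 'M[R]_n) :
  caratheodory F -> F x \in unitmx -> caratheodory (fun t => invmx (F t)).
Proof.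
move=> cF uFx; have Fc := caratheodory_cvg cF.
move: cF => [D [D0 [FD DD0]]].
exists (fun t => - (invmx (F t) *m D t *m invmx (F x))),
  (- (invmx (F x) *m D0 *m invmx (F x))); split; last first.
  apply: cvgN; apply: cvg_mulmx; last exact: cvg_cst.
  by apply: cvg_mulmx => //; exact: cvg_invmx.
near=> t.
have uFt : F t \in unitmx by near: t; exact: near_cvg_unitmx Fc uFx.
have resolvent : invmx (F t) - invmx (F x) = invmx (F t) *m (F x - F t) *m invmx (F x).
  by rewrite mulmxBr mulmxBl mulVmx // mulmxK // mul1mx.
have FE : F t = F x + (t - x) *: D t by near: t.
rewrite -[LHS](subrK (invmx (F x))) resolvent addrC; congr (_ + _).
by rewrite {2}FE opprD addNKr mulmxN mulNmx -scalemxAr -scalemxAl scalerN.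
Unshelve. all: by end_near.
Qed.

End Caratheodory.

Section Stationary.
Variable R : realType.

Lemma is_derive0_bounded (h m : R -> R) (x : R) :
  (\forall t \near x, `|h t - h x| <= `|t - x| * `|m t|) ->
  m t @[t --> x] --> 0 -> is_derive x 1 h 0.
Proof.
move=> /nbhs0P hm mx.
have shift0 : (m \o shift x) k @[k --> 0] --> 0.
  by rewrite cvg_comp_shift add0r.
have m0 : `|(m \o shift x) k| @[k --> 0^'] --> 0.
  have : (m \o shift x) k @[k --> 0^'] --> 0.
    by apply: cvg_trans shift0; apply: cvg_app; exact: nbhs_dnbhs.
  by move=> /cvg_norm; rewrite normr0.
have quot : k^-1 *: ((h \o shift x) (k *: 1) - h x) @[k --> 0^'] --> 0.
  have m0N : - `|(m \o shift x) k| @[k --> 0^'] --> 0.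
    by move: m0 => /cvgN; rewrite oppr0.
  apply: (squeeze_cvgr _ m0N m0); near=> k.
  have k0 : k != 0 by near: k; exact: nbhs_dnbhs_neq.
  have : `|h (x + k) - h x| <= `|x + k - x| * `|m (x + k)|.
    by near: k; exact: nbhs_dnbhs.
  rewrite addrAC subrr add0r => hk.
  rewrite -ler_norml /= /shift -[k%:A]/(k * 1) mulr1 !(addrC k).
  rewrite -[k^-1 *: _]/(k^-1 * _) normrM normfV ler_pdivrMl ?normr_gt0 //.
by split; [exact: cvgP quot | exact: cvg_lim quot].
Unshelve. all: by end_near.
Qed.

Lemma is_derive_nll n (S : R -> 'M[R]_n) (h : R -> R) (x : R) :
  caratheodory x S -> (\forall t \near x, pd_mx (S t) /\ h t = nll (S t) (S x)) ->
  is_derive x 1 h 0.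
Proof.
move=> cS near_h; have [pdSx hx] := nbhs_singleton near_h.
have iSc : invmx (S t) @[t --> x] --> invmx (S x).
  exact: cvg_invmx (caratheodory_cvg cS) (pd_mx_unit pdSx).
move: cS => [D [D0 [SD DD0]]].
apply: (is_derive0_bounded (m := fun t => \tr ((invmx (S x) - invmx (S t)) *m D t))).
  near=> t; have [pdSt ->] : pd_mx (S t) /\ h t = nll (S t) (S x) by near: t.
  have SE : S t = S x + (t - x) *: D t by near: t.
  have nll_gap : \tr ((invmx (S t) - invmx (S x)) *m (S x - S t)) =
      (t - x) * \tr ((invmx (S x) - invmx (S t)) *m D t).
    rewrite [in S x - S t]SE opprD addNKr mulmxN -scalemxAr -scalerN mxtraceZ.
    by rewrite -mulNmx opprB.
  rewrite hx ger0_norm ?subr_ge0 ?nll_min // -normrM -nll_gap.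
  exact: le_trans (nll_sub_le pdSt pdSx) (ler_norm _).
rewrite -(mxtrace0 R n) -(mul0mx n D0) -(subrr (invmx (S x))).
by apply: cvg_mxtrace; apply: cvg_mulmx DD0; apply: cvgB iSc; exact: cvg_cst.
Unshelve. all: by end_near.
Qed.

End Stationary.

Section GridModel.
Variables (R : realType) (N Le : nat) (a : 'I_Le -> 'cV[R]_N).

Lemma Rinv_b_sym (w : 'I_Le -> R) (b : 'rV[R]_Le) : (Rinv_b a w b)^T = Rinv_b a w b.
Proof.
rewrite linearZ linear_sum /=; congr (_ *: _); apply: eq_bigr => l _.
by rewrite linearZ /= trmx_mul trmxK.
Qed.

Lemma Rinv_bDZ (w : 'I_Le -> R) (b e : 'rV[R]_Le) (t : R) :
  Rinv_b a w (b + t *: e) = Rinv_b a w b + t *: Rinv_b a w e.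
Proof.
rewrite /Rinv_b [t *: (_ *: _)]scalerA mulrC -scalerA -scalerDr; congr (_ *: _).
rewrite scaler_sumr -big_split /=; apply: eq_bigr => l _.
by rewrite scalerA -scalerDl !mxE mulrDl mulrA.
Qed.

Variables (r x : 'I_Le -> R) (Sp Sq Spq : 'M[R]_N) (sn2 : R).
Hypotheses (psd_joint : psd_mx (block_mx Sp Spq Spq^T Sq)) (sn2_ge0 : 0 <= sn2).

Definition cov_mx (Rm Xm : 'M[R]_N) : 'M[R]_N :=
  Rm *m Sp *m Rm + Xm *m Sq *m Xm + Rm *m Spq *m Xm + Xm *m Spq^T *m Rm + sn2%:M.

Local Notation Sigma := (Sigma_b a r x Sp Sq Spq sn2).
Local Notation defined := (f_defined a r x Sp Sq Spq sn2).

Lemma Sigma_bE (b : 'rV[R]_Le) :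
  Sigma b = cov_mx (invmx (Rinv_b a r b)) (invmx (Rinv_b a x b)).
Proof. by []. Qed.

Lemma cov_mx_sym (Rm Xm : 'M[R]_N) :
  Rm^T = Rm -> Xm^T = Xm -> (cov_mx Rm Xm)^T = cov_mx Rm Xm.
Proof.
move=> symR symX; have [symJ _] := psd_joint.
have symSp : Sp^T = Sp by have := congr1 ulsubmx symJ; rewrite tr_block_mx !block_mxKul.
have symSq : Sq^T = Sq by have := congr1 drsubmx symJ; rewrite tr_block_mx !block_mxKdr.
rewrite !linearD /= !trmx_mul !trmxK tr_scalar_mx symR symX symSp symSq !mulmxA.
by congr (_ + _); rewrite -addrA [X in _ + X]addrC addrA.
Qed.

Lemma cov_mx_psd (Rm Xm : 'M[R]_N) (v : 'rV[R]_N) :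
  Rm^T = Rm -> Xm^T = Xm -> 0 <= (v *m cov_mx Rm Xm *m v^T) 0 0.
Proof.
move=> symR symX; pose w := row_mx (v *m Rm) (v *m Xm).
have -> : v *m cov_mx Rm Xm *m v^T =
    w *m block_mx Sp Spq Spq^T Sq *m w^T + sn2 *: (v *m v^T).
  rewrite /w mul_row_block tr_row_mx mul_row_col !trmx_mul symR symX /cov_mx.
  rewrite !mulmxDl !mulmxDr !mulmxDl !mulmxA mul_mx_scalar -scalemxAl; congr (_ + _).
  by rewrite -!addrA; congr (_ + _); rewrite addrC -addrA [in RHS]addrCA.
rewrite mxE addr_ge0 ?psd_joint.2 // [X in _ <= X]mxE mulr_ge0 // mxE.
by apply: sumr_ge0 => j _; rewrite [v^T _ _]mxE -expr2 sqr_ge0.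
Qed.

Lemma caratheodory_cov_mx (F H : R -> 'M[R]_N) (t0 : R) :
  caratheodory t0 F -> caratheodory t0 H -> caratheodory t0 (fun t => cov_mx (F t) (H t)).
Proof.
move=> cF cH; rewrite /cov_mx.
by repeat first [exact: cF | exact: cH | exact: caratheodory_cst
  | apply: caratheodoryD | apply: caratheodoryM].
Qed.

Lemma caratheodory_invmx_affine (A B : 'M[R]_N) :
  A \in unitmx -> caratheodory 0 (fun t => invmx (A + t *: B)).
Proof.
by move=> uA; apply: caratheodoryV; [exact: caratheodory_affine | rewrite scale0r addr0].
Qed.

Lemma caratheodory_Sigma_b (b e : 'rV[R]_Le) :
  Rinv_b a r b \in unitmx -> Rinv_b a x b \in unitmx ->
  caratheodory 0 (fun t => Sigma (b + t *: e)).
Proof.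
move=> uR uX; rewrite (_ : (fun t => _) = fun t => cov_mx
  (invmx (Rinv_b a r b + t *: Rinv_b a r e)) (invmx (Rinv_b a x b + t *: Rinv_b a x e))).
  by apply: caratheodory_cov_mx; exact: caratheodory_invmx_affine.
by apply: funext => t; rewrite Sigma_bE !Rinv_bDZ.
Qed.

Lemma near_f_defined (b e : 'rV[R]_Le) :
  defined b -> \forall t \near 0, defined (b + t *: e).
Proof.
move=> [uR [uX pdS]].
have near_unit (w : 'I_Le -> R) : Rinv_b a w b \in unitmx ->
    \forall t \near 0, Rinv_b a w (b + t *: e) \in unitmx.
  move=> uA; have := caratheodory_cvg (caratheodory_affine 0 (Rinv_b a w b) (Rinv_b a w e)).
  rewrite scale0r addr0 => /near_cvg_unitmx /(_ uA).
  by apply: filterS => t; rewrite Rinv_bDZ.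
have := caratheodory_cvg (caratheodory_Sigma_b e uR uX).
rewrite scale0r addr0 => /near_cvg_unitmx /(_ (pd_mx_unit pdS)) near_uS.
near=> t; have uRt : Rinv_b a r (b + t *: e) \in unitmx by near: t; exact: near_unit.
have uXt : Rinv_b a x (b + t *: e) \in unitmx by near: t; exact: near_unit.
do 2!split => //.
have symInv w : (invmx (Rinv_b a w (b + t *: e)))^T = invmx (Rinv_b a w (b + t *: e)).
  by rewrite trmx_inv Rinv_b_sym.
apply: psd_mx_unit_pd; rewrite ?Sigma_bE.
- exact: cov_mx_sym.
- by move=> v; exact: cov_mx_psd.
- by near: t.
Unshelve. all: by end_near.
Qed.

Local Notation f := (f_obj a r x Sp Sq Spq sn2).

Lemma f_objE (Shat : 'M[R]_N) (b : 'rV[R]_Le) :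
  defined b -> f Shat b = nll (Sigma b) Shat.
Proof. by move=> defb; rewrite /f_obj asboolT. Qed.

Lemma f_obj_min (b0 b : 'rV[R]_Le) :
  defined b0 -> defined b -> f (Sigma b0) b0 <= f (Sigma b0) b.
Proof. by move=> defb0 defb; rewrite !f_objE //; exact: nll_min defb.2.2 defb0.2.2. Qed.

Lemma is_derive_f_obj (b0 e : 'rV[R]_Le) : defined b0 ->
  is_derive (0 : R) 1 (fun t : R => f (Sigma b0) (b0 + t *: e)) 0.
Proof.
move=> defb0; have [uR [uX _]] := defb0.
apply: is_derive_nll (caratheodory_Sigma_b e uR uX) _.
rewrite scale0r addr0; near=> t.
have deft : defined (b0 + t *: e) by near: t; exact: near_f_defined.
by split; [exact: deft.2.2 | exact: f_objE].
Unshelve. all: by end_near.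
Qed.

End GridModel.

Theorem lemma2 (R : realType) (N Le : nat) (a : 'I_Le -> 'cV[R]_N)
  (r x : 'I_Le -> R) (Sp Sq Spq : 'M[R]_N) (sn2 : R) (L : nat)
  (bo : 'rV[R]_Le) :
  (0 < N)%N -> (0 < L)%N ->
  (forall l, 0 < r l) -> (forall l, 0 < x l) ->
  0 <= sn2 ->
  psd_mx (block_mx Sp Spq Spq^T Sq) ->
  (forall l, bo 0 l = 0 \/ bo 0 l = 1) ->
  \sum_(l < Le) bo 0 l = L%:R ->
  f_defined a r x Sp Sq Spq sn2 bo ->
  let f := f_obj a r x Sp Sq Spq sn2 (Sigma_b a r x Sp Sq Spq sn2 bo) in
  (* gradient vanishes: every partial derivative of f at bo is 0 *)
  (forall l : 'I_Le,
     is_derive (0 : R) 1 (fun t : R => f (bo + t *: delta_mx 0 l)) 0) /\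
  (* global minimality over the binary feasible set *)
  (forall b : 'rV[R]_Le,
     (forall l, b 0 l = 0 \/ b 0 l = 1) -> \sum_(l < Le) b 0 l = L%:R ->
     f_defined a r x Sp Sq Spq sn2 b -> f bo <= f b) /\
  (* global minimality over the relaxed feasible set *)
  (forall b : 'rV[R]_Le,
     (forall l, 0 <= b 0 l <= 1) -> \sum_(l < Le) b 0 l = L%:R ->
     f_defined a r x Sp Sq Spq sn2 b -> f bo <= f b).
Proof.
move=> _ _ _ _ sn2_ge0 psd_joint _ _ defbo f.
split; first by move=> l; exact: is_derive_f_obj.
by split=> b _ _ defb; exact: f_obj_min.
Qed.
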